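(* For coprime integers $n,m>1$, $$m_2\!\left(\mathbb{Z}_{nm}^2\right)\le\min\left\{n\cdot m_2\!\left(\mathbb{Z}_m^2\right),\ m\cdot m_2\!\left(\mathbb{Z}_n^2\right)\right\}.$$
   Context: $\mathbb{Z}_k=\mathbb{Z}/k\mathbb{Z}$. A line in $\mathbb{Z}_k^2$ is a translate of a cyclic subgroup of order $k$ of the additive group $\mathbb{Z}_k^2$; points are collinear if they lie on a common line. A cap in $\mathbb{Z}_k^2$ is a subset no three distinct points of which are collinear. $m_2(\mathbb{Z}_k^2)$ denotes the maximum cardinality of a cap in $\mathbb{Z}_k^2$. *)

From mathcomp Require Import all_boot.
Set Implicit Arguments. Unset Strict Implicit. Unset Printing Implicit Defensive.

(* The plane Z_k^2 is represented by pairs of residues 'I_k * 'I_k, with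
   arithmetic done modulo k on the underlying naturals. *)
Definition pt (k : nat) : finType := ('I_k * 'I_k)%type.

(* The translate p + <g> of the cyclic subgroup generated by g;
   since t ranges over 0..k-1, this covers all multiples of g. *)
Definition tline (k : nat) (p g : pt k) : {set pt k} :=
  [set x : pt k | [exists t : 'I_k,
     (x.1 == (p.1 + t * g.1) %% k :> nat) && (x.2 == (p.2 + t * g.2) %% k :> nat)]].

Definition cyc (k : nat) (g : pt k) : {set pt k} :=
  [set x : pt k | [exists t : 'I_k,
     (x.1 == (t * g.1) %% k :> nat) && (x.2 == (t * g.2) %% k :> nat)]].

Definition is_line (k : nat) (L : {set pt k}) : bool :=
  [exists p : pt k, exists g : pt k, (#|cyc g| == k) && (L == tline p g)].

Definition collinear3 (k : nat) (x y z : pt k) : bool :=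
  [exists L : {set pt k}, [&& is_line L, x \in L, y \in L & z \in L]].

Definition is_cap (k : nat) (A : {set pt k}) : bool :=
  [forall x in A, forall y in A, forall z in A,
     [&& x != y, y != z & x != z] ==> ~~ collinear3 x y z].

Definition m2 (k : nat) : nat :=
  \max_(A : {set pt k} | is_cap A) #|A|.

From mathcomp Require Import all_boot.
Set Implicit Arguments. Unset Strict Implicit. Unset Printing Implicit Defensive.

(* Partition a cap A of Z_nm^2 into the
   n fibres of the map x |-> x.1 mod n.  The key fact is a lifting lemma: by
   the Chinese remainder theorem, a line p + <g> of Z_m^2 lifts to a line of
   Z_nm^2 (with direction congruent to (0,1) mod n) that contains every point
   of a fibre whose reduction mod m lies on p + <g>.  Hence in a fibre F:
   - the reduction of F mod m is a cap of Z_m^2, so if reduction is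
     injective on F then #|F| <= m_2(Z_m^2);
   - otherwise two points of F share their reduction, and since any two
     points of Z_m^2 lie on a common line, every third point of F would be
     collinear with them, so #|F| <= 2 <= m_2(Z_m^2). *)

Definition mkpt k (Hk : 0 < k) (a b : nat) : pt k :=
  (Ordinal (ltn_pmod a Hk), Ordinal (ltn_pmod b Hk)).

(* Reduction modulo k of a point of Z_N^2 (meaningful when k divides N). *)
Definition red k (Hk : 0 < k) {N : nat} (x : pt N) : pt k := mkpt Hk x.1 x.2.

Definition primitive k (g : pt k) : Prop :=
  forall t, k %| t * g.1 -> k %| t * g.2 -> k %| t.

Lemma cycE k (Hk : 0 < k) (g : pt k) :
  cyc g = [set mkpt Hk (t * g.1) (t * g.2) | t : 'I_k].
Proof.
apply/setP => x; rewrite inE; apply/existsP/imsetP.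
  case=> t /andP[/eqP h1 /eqP h2]; exists t => //.
  by case: x h1 h2 => [x1 x2] /= h1 h2; congr pair; apply: val_inj.
by case=> t _ ->; exists t; rewrite /= !eqxx.
Qed.

Lemma card_cyc_primitive k (Hk : 0 < k) (g : pt k) :
  #|cyc g| = k <-> primitive g.
Proof.
rewrite (cycE Hk); split.
  move=> h; have /imset_injP inj :
      #|[set mkpt Hk (t * g.1) (t * g.2) | t : 'I_k]| == #|'I_k|.
    by rewrite h card_ord.
  move=> t h1 h2.
  have e : mkpt Hk ((t %% k) * g.1) ((t %% k) * g.2) = mkpt Hk (0 * g.1) (0 * g.2).
    by congr pair; apply: val_inj => /=; rewrite mod0n modnMml; apply/eqP.
  move/(congr1 val): (inj (Ordinal (ltn_pmod t Hk)) (Ordinal Hk) isT isT e).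
  by move=> /= /eqP.
move=> pr; rewrite -[RHS](card_ord k); apply/eqP/imset_injP => t1 t2 _ _ e.
have /= e1 := congr1 (fun p => val p.1) e.
have /= e2 := congr1 (fun p => val p.2) e.
apply: val_inj => /=.
wlog le : t1 t2 {e} e1 e2 / t1 <= t2.
  move=> W; case: (leqP t1 t2) => h; first exact: W.
  by symmetry; apply: W => //; apply: ltnW.
have d : k %| t2 - t1.
  by apply: pr; rewrite mulnBl -eqn_mod_dvd ?leq_mul2r ?le ?orbT //; apply/eqP.
by move: d; rewrite -eqn_mod_dvd // !modn_small // => /eqP.
Qed.

Lemma mem_tline k (Hk : 0 < k) (w p g : pt k) (t : nat) :
  w.1 = p.1 + t * g.1 %[mod k] -> w.2 = p.2 + t * g.2 %[mod k] ->
  w \in tline p g.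
Proof.
move=> h1 h2; rewrite inE; apply/existsP; exists (Ordinal (ltn_pmod t Hk)).
have reduce c d : c + (t %% k) * d = c + t * d %[mod k].
  by rewrite -modnDmr modnMml modnDmr.
by rewrite /= reduce -h1 reduce -h2 !modn_small ?eqxx.
Qed.

Lemma mem_tlineP k (w p g : pt k) : w \in tline p g ->
  exists t, w.1 = p.1 + t * g.1 %[mod k] /\ w.2 = p.2 + t * g.2 %[mod k].
Proof.
rewrite inE => /existsP[t /andP[/eqP h1 /eqP h2]]; exists t.
by rewrite {1}h1 {1}h2 !modn_mod.
Qed.

Lemma mem_tline_base k (Hk : 0 < k) (p g : pt k) : p \in tline p g.
Proof. by apply: (mem_tline Hk (t := 0)); rewrite mul0n addn0. Qed.

(* Every vector (a, b) of Z_k^2 is a multiple of a primitive vector,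
   namely (a, b) / gcd(a, b) (or (1, 0) when a = b = 0). *)
Lemma primitive_multiple k (Hk1 : 1 < k) (a b : nat) : a < k -> b < k ->
  exists g : pt k, exists t,
    [/\ #|cyc g| = k, t * g.1 = a %[mod k] & t * g.2 = b %[mod k]].
Proof.
move=> ak bk; have Hk : 0 < k := ltnW Hk1.
have [e0|epos] := posnP (gcdn a b).
  have : ~~ (0 < gcdn a b) by rewrite e0.
  rewrite gcdn_gt0 negb_or !lt0n !negbK => /andP[/eqP -> /eqP ->].
  exists (Ordinal Hk1, Ordinal Hk), 0; split => //.
  by apply/(card_cyc_primitive Hk) => t /=; rewrite muln1.
set e := gcdn a b in epos *.
have la : a %/ e < k by apply: leq_ltn_trans (leq_div _ _) ak.
have lb : b %/ e < k by apply: leq_ltn_trans (leq_div _ _) bk.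
exists (Ordinal la, Ordinal lb), e; split; last 2 first.
- by rewrite /= mulnC divnK ?dvdn_gcdl.
- by rewrite /= mulnC divnK ?dvdn_gcdr.
apply/(card_cyc_primitive Hk) => t /= h1 h2.
have coprime_ab : gcdn (a %/ e) (b %/ e) = 1.
  apply/eqP; rewrite -(eqn_pmul2r epos) mul1n muln_gcdl.
  by rewrite !divnK ?dvdn_gcdl ?dvdn_gcdr.
have : k %| gcdn (t * (a %/ e)) (t * (b %/ e)) by rewrite dvdn_gcd h1 h2.
by rewrite -muln_gcdr coprime_ab muln1.
Qed.

Lemma line_through2 k (Hk1 : 1 < k) (X Z : pt k) :
  exists2 g : pt k, #|cyc g| = k & Z \in tline X g.
Proof.
have Hk : 0 < k := ltnW Hk1.
have [g [t [cg e1 e2]]] := primitive_multiple Hk1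
  (ltn_pmod (Z.1 + (k - X.1)) Hk) (ltn_pmod (Z.2 + (k - X.2)) Hk).
exists g => //; apply: (mem_tline Hk (t := t)).
  rewrite -modnDmr e1 modn_mod modnDmr addnCA subnKC ?modnDr //.
  exact: ltnW (ltn_ord _).
rewrite -modnDmr e2 modn_mod modnDmr addnCA subnKC ?modnDr //.
exact: ltnW (ltn_ord _).
Qed.

Lemma modn_affine d a a' t t' b b' : a = a' %[mod d] -> t = t' %[mod d] ->
  b = b' %[mod d] -> a + t * b = a' + t' * b' %[mod d].
Proof. by move=> ha ht hb; rewrite -modnDm -modnMm ha ht hb modnMm modnDm. Qed.

Section CRTLift.
Variables (n m : nat) (Hn : 0 < n) (Hm : 0 < m) (co : coprime n m).
Let Hnm : 0 < n * m := leq_mul Hn Hm.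

Lemma chinese_eq a b : a = b %[mod n] -> a = b %[mod m] -> a = b %[mod n * m].
Proof. by move=> h1 h2; apply/eqP; rewrite chinese_remainder // h1 h2 !eqxx. Qed.

Lemma modn_mull a : a %% (n * m) = a %[mod n].
Proof. by rewrite modn_dvdm // dvdn_mulr. Qed.

Lemma modn_mulr a : a %% (n * m) = a %[mod m].
Proof. by rewrite modn_dvdm // dvdn_mull. Qed.

(* The lift of the line p + <g> of Z_m^2 through the fibre of x: its base
   point is congruent to x mod n and to p mod m, and its direction is
   congruent to (0, 1) mod n and to g mod m. *)
Definition lift_base (x : pt (n * m)) (p : pt m) : pt (n * m) :=
  mkpt Hnm (chinese n m x.1 p.1) (chinese n m x.2 p.2).

Definition lift_dir (g : pt m) : pt (n * m) :=
  mkpt Hnm (chinese n m 0 g.1) (chinese n m 1 g.2).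

(* A point in the fibre of x whose reduction lies on p + <g> lies on the
   lifted line: mod n its second coordinate is reached by the (0, 1)
   component of the direction, mod m it follows the original line. *)
Lemma mem_lift_line (x w : pt (n * m)) (p g : pt m) :
  w.1 = x.1 %[mod n] -> red Hm w \in tline p g ->
  w \in tline (lift_base x p) (lift_dir g).
Proof.
move=> h1 /mem_tlineP [tw /= [e1 e2]]; rewrite !modn_mod in e1 e2.
(* the multiplier s is congruent to w.2 - x.2 mod n *)
have le : x.2 <= n * x.2 by rewrite leq_pmull.
set s := w.2 + (n * x.2 - x.2).
apply: (mem_tline Hnm (t := chinese n m s tw)) => /=; apply: chinese_eq.
- rewrite (modn_affine (a' := x.1) (t' := s) (b' := 0)) ?modn_mull ?chinese_modl //.
  by rewrite muln0 addn0.
- by rewrite (modn_affine (a' := p.1) (t' := tw) (b' := g.1)) ?modn_mulr ?chinese_modr.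
- rewrite (modn_affine (a' := x.2) (t' := s) (b' := 1)) ?modn_mull ?chinese_modl //.
  by rewrite muln1 /s addnA addnC addnA subnK // (mulnC n (x.2 : nat)) modnMDl.
- by rewrite (modn_affine (a' := p.2) (t' := tw) (b' := g.2)) ?modn_mulr ?chinese_modr.
Qed.

(* The lifted direction is primitive, so the lifted set is a line: a
   multiple t of it vanishing mod nm vanishes mod n (second coordinate 1)
   and mod m (g is primitive), hence t = 0 mod nm. *)
Lemma card_cyc_lift_dir (g : pt m) : #|cyc g| = m -> #|cyc (lift_dir g)| = n * m.
Proof.
move/(card_cyc_primitive Hm) => pg; apply/(card_cyc_primitive Hnm) => t /= d1 d2.
have dvd_mod d c c' : d %| n * m -> c = c' %[mod d] ->
    n * m %| t * (c %% (n * m)) -> d %| t * c'.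
  move=> dnm ecc' /(dvdn_trans dnm).
  by rewrite /dvdn -modnMmr (modn_dvdm _ dnm) ecc' modnMmr.
have dn : n %| n * m := dvdn_mulr m (dvdnn n).
have dm : m %| n * m := dvdn_mull n (dvdnn m).
have tn : n %| t * 1 := dvd_mod _ _ _ dn (chinese_modl co _ _) d2.
have tm : m %| t.
  apply: pg; first exact: dvd_mod dm (chinese_modr co _ _) d1.
  exact: dvd_mod dm (chinese_modr co _ _) d2.
by rewrite Gauss_dvd // -(muln1 t) tn muln1 tm.
Qed.

Lemma collinear_lift (x y z : pt (n * m)) (p g : pt m) : #|cyc g| = m ->
  y.1 = x.1 %[mod n] -> z.1 = x.1 %[mod n] ->
  red Hm x \in tline p g -> red Hm y \in tline p g -> red Hm z \in tline p g ->
  collinear3 x y z.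
Proof.
move=> cg hy hz mx my mz; apply/existsP.
exists (tline (lift_base x p) (lift_dir g)); rewrite !mem_lift_line // !andbT.
apply/existsP; exists (lift_base x p).
by apply/existsP; exists (lift_dir g); rewrite card_cyc_lift_dir ?eqxx.
Qed.

End CRTLift.

Lemma cap_not_collinear k (A : {set pt k}) x y z : is_cap A ->
  x \in A -> y \in A -> z \in A -> x != y -> y != z -> x != z ->
  ~~ collinear3 x y z.
Proof.
move=> /forall_inP/(_ x) capA xA yA zA xy yz xz.
move: (capA xA) => /forall_inP/(_ y yA)/forall_inP/(_ z zA)/implyP; apply.
by rewrite xy yz xz.
Qed.

Lemma cap_sub k (A B : {set pt k}) : B \subset A -> is_cap A -> is_cap B.
Proof.
move=> /subsetP BA capA; apply/forall_inP => x xB; apply/forall_inP => y yB.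
apply/forall_inP => z zB; apply/implyP => /and3P[xy yz xz].
exact: cap_not_collinear capA (BA _ xB) (BA _ yB) (BA _ zB) xy yz xz.
Qed.

Lemma cap_le_m2 k (A : {set pt k}) : is_cap A -> #|A| <= m2 k.
Proof. exact: (leq_bigmax_cond (F := fun A : {set pt k} => #|A|)). Qed.

Lemma cap_pair k (a b : pt k) : is_cap [set a; b].
Proof.
apply/forall_inP => x xA; apply/forall_inP => y yA; apply/forall_inP => z zA.
apply/implyP => /and3P[xy yz xz]; exfalso.
move: xA yA zA xy yz xz; rewrite !in_set2.
by case/orP=> /eqP ->; case/orP=> /eqP ->; case/orP=> /eqP ->; rewrite ?eqxx ?andbF.
Qed.

Lemma m2_ge2 k : 1 < k -> 2 <= m2 k.
Proof.
move=> Hk1; have Hk : 0 < k := ltnW Hk1.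
have := cap_le_m2 (cap_pair (Ordinal Hk, Ordinal Hk) (Ordinal Hk1, Ordinal Hk)).
by rewrite cards2.
Qed.

Section Fibre.
Variables (n m : nat) (Hn : 0 < n) (Hm1 : 1 < m) (co : coprime n m).
Let Hm : 0 < m := ltnW Hm1.

Variable F : {set pt (n * m)}.
Hypothesis capF : is_cap F.
Hypothesis fibreF : {in F &, forall u v : pt (n * m), u.1 = v.1 %[mod n]}.

(* Reduction mod m maps F onto a cap of Z_m^2: a line through three of the
   reductions would lift to a line through three points of F. *)
Lemma cap_red_fibre : is_cap (red Hm @: F).
Proof.
apply/forall_inP => X /imsetP[x xF ->].
apply/forall_inP => Y /imsetP[y yF ->]; apply/forall_inP => Z /imsetP[z zF ->].
apply/implyP => /and3P[xy yz xz]; apply/negP.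
case/existsP => L /and4P[/existsP[p /existsP[g /andP[/eqP cg /eqP ->]]] mx my mz].
have lift_neq (u v : pt (n * m)) : red Hm u != red Hm v -> u != v.
  by apply: contra_neq => ->.
have := cap_not_collinear capF xF yF zF (lift_neq _ _ xy) (lift_neq _ _ yz)
  (lift_neq _ _ xz).
by rewrite (collinear_lift Hn co cg (fibreF yF xF) (fibreF zF xF) mx my mz).
Qed.

(* If two distinct points of F have the same reduction, then F is just
   these two points: a third one would lie on the lift of a line through
   the two reductions. *)
Lemma fibre_collapse x y : x \in F -> y \in F -> x != y ->
  red Hm x = red Hm y -> F \subset [set x; y].
Proof.
move=> xF yF xy exy; apply/subsetP => z zF; rewrite in_set2.
apply/negPn/negP; rewrite negb_or => /andP[zx zy].
have [g cg mz] := line_through2 Hm1 (red Hm x) (red Hm z).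
have mx := mem_tline_base Hm (red Hm x) g.
have my : red Hm y \in tline (red Hm x) g by rewrite -exy.
rewrite eq_sym in zx; rewrite eq_sym in zy.
have := cap_not_collinear capF xF yF zF xy zy zx.
by rewrite (collinear_lift Hn co cg (fibreF yF xF) (fibreF zF xF) mx my mz).
Qed.

Lemma fibre_le_m2 : #|F| <= m2 m.
Proof.
have [/dinjectiveP injF | /dinjectivePn [x xF [y]]] := boolP (dinjectiveb (red Hm) F).
  by rewrite -(card_in_imset injF) cap_le_m2 // cap_red_fibre.
rewrite inE => /andP[yx yF] exy.
have xy : x != y by rewrite eq_sym.
apply: leq_trans (m2_ge2 Hm1).
apply: leq_trans (subset_leq_card (fibre_collapse xF yF xy exy)) _.
by rewrite cards2 xy.
Qed.

End Fibre.

Lemma m2_mul_le n m : 0 < n -> 1 < m -> coprime n m -> m2 (n * m) <= n * m2 m.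
Proof.
move=> Hn Hm1 co; apply/bigmax_leqP => A capA.
rewrite -sum1_card (partition_big (fun x : pt (n * m) => Ordinal (ltn_pmod x.1 Hn))
  xpredT) //=.
apply: (@leq_trans (\sum_(c < n) m2 m)); last by rewrite sum_nat_const card_ord.
apply: leq_sum => c _.
set Fc := [set x in A | x.1 %% n == c].
have -> : \sum_(x in A | Ordinal (ltn_pmod x.1 Hn) == c) 1 = #|Fc|.
  by rewrite sum1_card; apply: eq_card => x; rewrite !inE.
apply: (fibre_le_m2 Hn Hm1 co).
- by apply: cap_sub capA; apply/subsetP => x; rewrite inE => /andP[].
- by move=> u v; rewrite !inE => /andP[_ /eqP->] /andP[_ /eqP->].
Qed.

Theorem mainTheorem8 (n m : nat) :
  1 < n -> 1 < m -> coprime n m ->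
  m2 (n * m) <= minn (n * m2 m) (m * m2 n).
Proof.
move=> Hn1 Hm1 co; rewrite leq_min m2_mul_le ?(ltnW Hn1) //=.
by rewrite mulnC m2_mul_le ?(ltnW Hm1) // coprime_sym.
Qed.
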